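(* Let $(M^n,g,k)$ be an initial data set with $M$ spin, let $\phi\in\overline{\mathcal S}(M)$ and $p\in M$. If $N(\phi)=|X(\phi)|$ at $p$, or if $N(\phi)=|Y(\phi)|$ at $p$, then at $p$: $$N(\phi)\,\omega(\phi)=X(\phi)\wedge Y(\phi),\qquad X(\phi)\perp Y(\phi),\qquad N(\phi)^2-|X(\phi)|^2-|Y(\phi)|^2+\tfrac12|\omega(\phi)|^2=0 .$$
   Context: Spinor conventions. For a Riemannian spin manifold $(M^n,g)$, $\mathcal S$ is the complex spinor bundle with Hermitian inner product $\langle\cdot,\cdot\rangle$ (complex linear in the first slot); Clifford multiplication by tangent vectors satisfies $vw+wv=-2g(v,w)$ and vectors act skew-Hermitian. Set $\overline{\mathcal S}=\mathcal S\oplus\mathcal S$ with direct-sum inner product, where a tangent vector $e_l$ and an extra element $e_0$ act by $e_l(\psi_1,\psi_2)=(e_l\psi_1,-e_l\psi_2)$, $e_0(\psi_1,\psi_2)=(\psi_2,\psi_1)$. With $\{e_i\}_{i=1}^n$ an orthonormal frame and summation over repeated indices, for $\phi\in\overline{\mathcal S}$: $N(\phi)=|\phi|^2$, $X(\phi)=\langle e_ie_0\phi,\phi\rangle e_i$, $Y(\phi)=\langle\mathbf i e_i\phi,\phi\rangle e_i$, $\omega_{ij}(\phi)=\operatorname{Im}\langle e_ie_je_0\phi,\phi\rangle$; these are real. For vectors $V,W$, $(V\wedge W)_{ij}=V_iW_j-V_jW_i$, and $|\omega|^2=\sum_{i,j}\omega_{ij}^2$. *)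

(* Pointwise (fibrewise) linear algebra at the point p. *)
From HB Require Import structures.
From mathcomp Require Import all_boot all_order all_algebra.
Set Implicit Arguments. Unset Strict Implicit. Unset Printing Implicit Defensive.
Import Order.TTheory GRing.Theory Num.Theory.
Local Open Scope ring_scope.

Section SpinorAlgebra.
Variables (C : numClosedFieldType) (m n : nat).

(* Fibre S_p of the spinor bundle, modelled as C^m with its Hermitian product,
   complex linear in the first slot. *)
Definition herm (u v : 'cV[C]_m) : C := \sum_(k < m) u k 0 * (v k 0)^*.

Definition Sbar := ('cV[C]_m * 'cV[C]_m)%type.
Definition hermbar (p q : Sbar) : C := herm p.1 q.1 + herm p.2 q.2.
Definition scalebar (a : C) (p : Sbar) : Sbar := (a *: p.1, a *: p.2).

(* Clifford structure on S_p for an orthonormal frame e_1..e_n of T_pM: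
   E i is Clifford multiplication by e_i. *)
Definition clifford_frame (E : 'I_n -> 'M[C]_m) : Prop :=
  (forall i j : 'I_n, E i *m E j + E j *m E i = ((-2) * (i == j)%:R)%:M) /\
  (forall i : 'I_n, map_mx (fun z => z^*) (E i)^T = - E i).

Definition ebar (E : 'I_n -> 'M[C]_m) (l : 'I_n) (p : Sbar) : Sbar :=
  (E l *m p.1, - (E l *m p.2)).
Definition e0 (p : Sbar) : Sbar := (p.2, p.1).

(* The quantities N, X, Y, omega (real-valued, computed in C). *)
Definition Nq (phi : Sbar) : C := hermbar phi phi.
Definition Xq (E : 'I_n -> 'M[C]_m) (phi : Sbar) (i : 'I_n) : C :=
  hermbar (ebar E i (e0 phi)) phi.
Definition Yq (E : 'I_n -> 'M[C]_m) (phi : Sbar) (i : 'I_n) : C :=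
  hermbar (scalebar 'i (ebar E i phi)) phi.
Definition omegaq (E : 'I_n -> 'M[C]_m) (phi : Sbar) (i j : 'I_n) : C :=
  'Im (hermbar (ebar E i (ebar E j (e0 phi))) phi).

Definition vdot (V W : 'I_n -> C) : C := \sum_(i < n) V i * W i.
Definition vnorm (V : 'I_n -> C) : C := sqrtC (vdot V V).
Definition wedge (V W : 'I_n -> C) (i j : 'I_n) : C := V i * W j - V j * W i.
Definition formnorm2 (w : 'I_n -> 'I_n -> C) : C :=
  \sum_(i < n) \sum_(j < n) w i j ^+ 2.

End SpinorAlgebra.

From HB Require Import structures.
From mathcomp Require Import all_boot all_order all_algebra.
From mathcomp Require Import ring.
Set Implicit Arguments. Unset Strict Implicit. Unset Printing Implicit Defensive.
Import Order.TTheory GRing.Theory Num.Theory.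
Local Open Scope ring_scope.

(* Write phi = (a, b) and, for a real vector w, F_w = sum_i w_i e_i, which is
   skew-adjoint with F_w^2 = -|w|^2.  Then w.X = <F_w e_0 phi, phi> and
   w.Y = <i F_w phi, phi>, with |F_w e_0 phi| = |i F_w phi| = |phi| when
   |w| = 1.  If N = |X| (resp. N = |Y|), the unit vector w = X/N (resp. Y/N)
   saturates Cauchy-Schwarz, which forces b = -F_w a (resp. F_w a = -i a and
   F_w b = i b).  The Clifford relations then give Y perp w and
   omega = w ^ Y (resp. X perp w and omega = X ^ w), and the three identities
   follow from Lagrange's identity |w ^ V|^2 = 2 (|w|^2 |V|^2 - (w.V)^2). *)

Section FrameIdentities.
Variables (C : numClosedFieldType) (n : nat).
Implicit Types (N : C) (u V W X Y : 'I_n -> C) (w : 'I_n -> 'I_n -> C).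

Definition frame_identities N X Y w : Prop :=
  [/\ forall i j, N * w i j = wedge X Y i j, vdot X Y = 0
    & N ^+ 2 - vdot X X - vdot Y Y + 2^-1 * formnorm2 w = 0].

Lemma vdotC V W : vdot V W = vdot W V.
Proof. by apply: eq_bigr => i _; rewrite mulrC. Qed.

Lemma formnorm2_wedge V W :
  formnorm2 (wedge V W) = 2 * (vdot V V * vdot W W - vdot V W ^+ 2).
Proof.
have sum_prod (f g : 'I_n -> C) : \sum_i \sum_j f i * g j = (\sum_i f i) * (\sum_j g j).
  by rewrite mulr_suml; apply: eq_bigr => i _; rewrite mulr_sumr.
rewrite /formnorm2 /vdot (eq_bigr (fun i =>
  \sum_j ((V i * V i) * (W j * W j) + (W i * W i) * (V j * V j))
  - \sum_j (2 * (V i * W i)) * (V j * W j))); last first.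
  by move=> i _; rewrite -sumrB; apply: eq_bigr => j _; rewrite /wedge; ring.
rewrite sumrB; under eq_bigr => i _ do rewrite big_split.
by rewrite big_split /= !sum_prod -mulr_sumr; ring.
Qed.

Lemma frame_identities0 X Y w : (forall i, X i = 0) -> (forall i, Y i = 0) ->
  (forall i j, w i j = 0) -> frame_identities 0 X Y w.
Proof.
move=> X0 Y0 w0; have vdot0 V U : (forall i, V i = 0) -> vdot V U = 0.
  by move=> V0; rewrite /vdot big1 // => i _; rewrite V0 mul0r.
have w_norm0 : formnorm2 w = 0.
  by rewrite /formnorm2 big1 // => i _; rewrite big1 // => j _; rewrite w0 expr0n.
split; first by move=> i j; rewrite /wedge !X0 !mul0r subrr.
  exact: vdot0.
by rewrite !vdot0 // w_norm0 expr0n !subr0 mulr0 addr0.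
Qed.

Lemma frame_identities_unit N u X Y w : vdot u u = 1 -> (forall i, X i = N * u i) ->
  vdot u Y = 0 -> (forall i j, w i j = wedge u Y i j) -> frame_identities N X Y w.
Proof.
move=> u_unit Xu uY wE.
have XV V : vdot X V = N * vdot u V.
  by rewrite /vdot mulr_sumr; apply: eq_bigr => i _; rewrite Xu mulrA.
have w_norm : formnorm2 w = formnorm2 (wedge u Y).
  by apply: eq_bigr => i _; apply: eq_bigr => j _; rewrite wE.
split; first by move=> i j; rewrite wE /wedge !Xu; ring.
  by rewrite XV uY mulr0.
rewrite w_norm formnorm2_wedge XV vdotC XV u_unit uY mulKf ?pnatr_eq0 //; ring.
Qed.

Lemma frame_identities_swap N X Y w w' : frame_identities N Y X w' ->
  (forall i j, w i j = - w' i j) -> frame_identities N X Y w.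
Proof.
case=> w'E YX norm'E wE.
have w_norm : formnorm2 w = formnorm2 w'.
  by apply: eq_bigr => i _; apply: eq_bigr => j _; rewrite wE sqrrN.
split; first by move=> i j; rewrite wE mulrN w'E /wedge; ring.
  by rewrite vdotC.
by rewrite w_norm -norm'E; ring.
Qed.

Lemma unit_direction N X : N^* = N -> (forall i, (X i)^* = X i) ->
  N != 0 -> N = vnorm X ->
  exists2 u, (forall i, (u i)^* = u i) &
    [/\ vdot u u = 1, vdot u X = N & forall i, X i = N * u i].
Proof.
move=> N_real X_real N_neq0 NX; have NN : N ^+ 2 = vdot X X by rewrite {1}NX sqrtCK.
exists (fun i => X i / N) => [i|]; first by rewrite fmorph_div /= X_real N_real.
split=> [||i]; last by rewrite mulrC divfK.
- rewrite /vdot (eq_bigr (fun i => X i * X i * N^-1 ^+ 2)) => [|i _]; last by ring.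
  by rewrite -mulr_suml -/(vdot X X) -NN exprVn mulfV // expf_neq0.
- rewrite /vdot (eq_bigr (fun i => X i * X i * N^-1)) => [|i _]; last by ring.
  by rewrite -mulr_suml -/(vdot X X) -NN expr2 mulfK.
Qed.

End FrameIdentities.

Section ImaginaryPart.
Variable C : numClosedFieldType.
Implicit Types z r : C.

Lemma Im_conjN z : z^* = - z -> 'Im z = - 'i * z.
Proof. by move=> zN; rewrite ImE zN; field. Qed.

Lemma Im_mulCi z r : r^* = r -> 'i * z = r -> 'Im z = - r.
Proof.
move=> r_real iz; apply: oppr_inj; rewrite -ReMil iz opprK.
exact/Creal_ReP/CrealP.
Qed.

End ImaginaryPart.

Section Hermitian.
Variables (C : numClosedFieldType) (m : nat).
Local Notation herm := (@herm C m).
Implicit Types (u v x y : 'cV[C]_m) (M : 'M[C]_m).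

Definition adj M : 'M[C]_m := map_mx (fun z => z^*) M^T.

Lemma adjK M : adj (adj M) = M.
Proof. by apply/matrixP => i j; rewrite !mxE conjCK. Qed.

Lemma herm_adj M u v : herm (M *m u) v = herm u (adj M *m v).
Proof.
rewrite /herm; under eq_bigr => k _ do rewrite mxE mulr_suml.
under [RHS]eq_bigr => k _ do rewrite mxE rmorph_sum mulr_sumr.
rewrite exchange_big /=; apply: eq_bigr => l _; apply: eq_bigr => k _.
by rewrite !mxE rmorphM /= conjCK mulrCA mulrA.
Qed.

Lemma herm_adjr M u v : herm u (M *m v) = herm (adj M *m u) v.
Proof. by rewrite herm_adj adjK. Qed.

Lemma conj_herm u v : (herm u v)^* = herm v u.
Proof.
rewrite /herm rmorph_sum; apply: eq_bigr => k _.
by rewrite rmorphM /= conjCK mulrC.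
Qed.

Lemma herm_real u : (herm u u)^* = herm u u.
Proof. by rewrite conj_herm. Qed.

Lemma hermDl u v x : herm (u + v) x = herm u x + herm v x.
Proof. by rewrite /herm -big_split; apply: eq_bigr => k _; rewrite mxE mulrDl. Qed.

Lemma hermZl c u x : herm (c *: u) x = c * herm u x.
Proof. by rewrite /herm mulr_sumr; apply: eq_bigr => k _; rewrite mxE mulrA. Qed.

Lemma hermNl u x : herm (- u) x = - herm u x.
Proof. by rewrite -scaleN1r hermZl mulN1r. Qed.

Lemma hermBl u v x : herm (u - v) x = herm u x - herm v x.
Proof. by rewrite hermDl hermNl. Qed.

Lemma herm_suml (I : finType) (f : I -> 'cV[C]_m) x :
  herm (\sum_i f i) x = \sum_i herm (f i) x.
Proof.
rewrite /herm exchange_big /=; apply: eq_bigr => k _.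
by rewrite summxE mulr_suml.
Qed.

Lemma hermZr c u x : herm x (c *: u) = c^* * herm x u.
Proof. by rewrite -conj_herm hermZl rmorphM /= conj_herm. Qed.

Lemma hermNr u x : herm x (- u) = - herm x u.
Proof. by rewrite -conj_herm hermNl rmorphN /= conj_herm. Qed.

Lemma hermBr u v x : herm x (u - v) = herm x u - herm x v.
Proof. by rewrite -conj_herm hermBl rmorphB /= !conj_herm. Qed.

Lemma herm_i x y : herm ('i *: x) ('i *: y) = herm x y.
Proof. by rewrite hermZl hermZr conjCi mulrA mulrN -expr2 sqrCi opprK mul1r. Qed.

Lemma herm0l x : herm 0 x = 0.
Proof. by rewrite -(scale0r 0) hermZl mul0r. Qed.

Lemma herm0r x : herm x 0 = 0.
Proof. by rewrite /herm big1 // => k _; rewrite mxE conjC0 mulr0. Qed.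

Lemma herm_ge0 u : 0 <= herm u u.
Proof. by apply: sumr_ge0 => k _; rewrite -normCK exprn_ge0. Qed.

Lemma herm_eq0 u : (herm u u == 0) = (u == 0).
Proof.
apply/idP/eqP => [|->]; last by rewrite herm0r.
rewrite psumr_eq0 => [/allP u0|k _]; last by rewrite -normCK exprn_ge0.
apply/matrixP => k j; rewrite (ord1 j) mxE.
have := u0 k (mem_index_enum _); rewrite -normCK expf_eq0 /= normr_eq0.
by move/eqP.
Qed.

Lemma hermbar_eq0 (p : Sbar C m) : (hermbar p p == 0) = (p == (0, 0)).
Proof.
case: p => p1 p2; rewrite /hermbar /= paddr_eq0 ?herm_ge0 // !herm_eq0.
by rewrite xpair_eqE.
Qed.

Lemma hermbar0r (p : Sbar C m) : hermbar p (0, 0) = 0.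
Proof. by rewrite /hermbar !herm0r addr0. Qed.

Lemma cauchy_schwarz_eq (p q : Sbar C m) :
  hermbar p p = hermbar q q -> hermbar p q = hermbar q q -> p = q.
Proof.
case: p q => [p1 p2] [q1 q2]; rewrite /hermbar /= => pp pq.
have qp : herm q1 p1 + herm q2 p2 = herm q1 q1 + herm q2 q2.
  by rewrite -(conj_herm p1) -(conj_herm p2) -rmorphD pq rmorphD /= !herm_real.
have /eqP : hermbar (p1 - q1, p2 - q2) (p1 - q1, p2 - q2) = 0.
  rewrite /hermbar /= !hermBl !hermBr.
  transitivity ((herm p1 p1 + herm p2 p2) - (herm p1 q1 + herm p2 q2)
                - (herm q1 p1 + herm q2 p2) + (herm q1 q1 + herm q2 q2)).
    by ring.
  by rewrite pp pq qp subrr sub0r addNr.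
by rewrite hermbar_eq0 xpair_eqE !subr_eq0 => /andP[/eqP-> /eqP->].
Qed.

End Hermitian.

Section Clifford.
Variables (C : numClosedFieldType) (m n : nat) (E : 'I_n -> 'M[C]_m).
Hypothesis E_anticomm :
  forall i j, E i *m E j + E j *m E i = ((-2) * (i == j)%:R)%:M.
Hypothesis E_skew : forall i, adj (E i) = - E i.
Implicit Types (w : 'I_n -> C) (x y : 'cV[C]_m).

Definition cliff w : 'M[C]_m := \sum_i w i *: E i.

Lemma herm_cliffl w x y : herm (cliff w *m x) y = \sum_i w i * herm (E i *m x) y.
Proof.
rewrite /cliff mulmx_suml herm_suml; apply: eq_bigr => i _.
by rewrite -scalemxAl hermZl.
Qed.

Lemma adj_cliff w : (forall i, (w i)^* = w i) -> adj (cliff w) = - cliff w.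
Proof.
move=> w_real; apply/matrixP => k l.
rewrite /cliff /adj !mxE !summxE rmorph_sum -sumrN; apply: eq_bigr => i _.
have /matrixP/(_ k l) := E_skew i; rewrite !mxE => Eskew.
by rewrite rmorphM /= w_real Eskew mulrN.
Qed.

Lemma cliff_anticomm w i : cliff w *m E i + E i *m cliff w = (-2 * w i)%:M.
Proof.
rewrite /cliff mulmx_suml mulmx_sumr -big_split /=.
under eq_bigr => k _ do
  rewrite -scalemxAl -scalemxAr -scalerDr E_anticomm scale_scalar_mx.
rewrite -raddf_sum (bigD1 i) //= big1 ?addr0 ?eqxx ?mulr1 1?mulrC //.
by move=> k /negbTE ->; rewrite mulr0 mulr0.
Qed.

Lemma cliff_E w i : cliff w *m E i = (-2 * w i)%:M - E i *m cliff w.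
Proof. by rewrite -cliff_anticomm addrK. Qed.

Lemma cliff_sqr w : cliff w *m cliff w = (- vdot w w)%:M.
Proof.
have sqrl : cliff w *m cliff w = \sum_i w i *: (E i *m cliff w).
  by rewrite {1}/cliff mulmx_suml; apply: eq_bigr => i _; rewrite scalemxAl.
have sqrr : cliff w *m cliff w = \sum_i w i *: (cliff w *m E i).
  by rewrite {2}/cliff mulmx_sumr; apply: eq_bigr => i _; rewrite scalemxAr.
have : (cliff w *m cliff w) *+ 2 = (- vdot w w)%:M *+ 2.
  rewrite mulr2n {1}sqrr sqrl -big_split /=.
  under eq_bigr => i _ do rewrite -scalerDr cliff_anticomm scale_scalar_mx.
  rewrite -raddf_sum -raddfMn /= /vdot -sumrN -sumrMnl.
  by congr _%:M; apply: eq_bigr => i _; rewrite -mulr_natr; ring.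
by move/(congr1 ( *:%R 2^-1)); rewrite -!scaler_nat !scalerA mulVf ?pnatr_eq0 // !scale1r.
Qed.

Lemma cliff_E_cliff w i :
  cliff w *m E i *m cliff w = vdot w w *: E i - (2 * w i) *: cliff w.
Proof.
rewrite cliff_E mulmxBl mul_scalar_mx -mulmxA cliff_sqr mul_mx_scalar.
by rewrite scaleNr opprK addrC mulNr scaleNr.
Qed.

Lemma cliff_commutator_EE w i j :
  E i *m E j *m cliff w - cliff w *m (E i *m E j) = (2 * w i) *: E j - (2 * w j) *: E i.
Proof.
rewrite (mulmxA (cliff w)) cliff_E mulmxBl mul_scalar_mx.
rewrite -(mulmxA (E i) (cliff w)) cliff_E mulmxBr mul_mx_scalar mulmxA.
by rewrite !mulNr !scaleNr opprB opprK addrA addrCA subrr addr0 addrC.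
Qed.

Implicit Types (a b : 'cV[C]_m) (phi : Sbar C m).

Definition cliffbar w phi : Sbar C m := (cliff w *m phi.1, - (cliff w *m phi.2)).

Lemma vdot_Xq w phi : vdot w (Xq E phi) = hermbar (cliffbar w (e0 phi)) phi.
Proof.
rewrite /vdot /hermbar /= hermNl !herm_cliffl -sumrN -big_split /=.
by apply: eq_bigr => i _; rewrite /Xq /hermbar /= hermNl mulrBr.
Qed.

Lemma vdot_Yq w phi :
  vdot w (Yq E phi) = hermbar (scalebar 'i (cliffbar w phi)) phi.
Proof.
rewrite /vdot /hermbar /= !hermZl hermNl !herm_cliffl mulrN !mulr_sumr.
rewrite -sumrN -big_split /=; apply: eq_bigr => i _.
by rewrite /Yq /hermbar /= !hermZl hermNl; ring.
Qed.

Lemma herm_E_skew i x : (herm (E i *m x) x)^* = - herm (E i *m x) x.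
Proof. by rewrite conj_herm herm_adjr E_skew mulNmx hermNl. Qed.

Lemma Xq_conj phi i :
  Xq E phi i = herm (E i *m phi.2) phi.1 + (herm (E i *m phi.2) phi.1)^*.
Proof.
rewrite /Xq /hermbar /= hermNl (herm_adj (E i) phi.1) E_skew mulNmx hermNr opprK.
by rewrite conj_herm.
Qed.

Lemma Xq_real phi i : (Xq E phi i)^* = Xq E phi i.
Proof. by rewrite Xq_conj rmorphD /= conjCK addrC. Qed.

Lemma Nq_real phi : (Nq phi)^* = Nq phi.
Proof. by rewrite /Nq /hermbar rmorphD /= !herm_real. Qed.

Lemma Yq_real phi i : (Yq E phi i)^* = Yq E phi i.
Proof.
rewrite /Yq /hermbar /= !hermZl hermNl rmorphD !rmorphM rmorphN /= conjCi.
by rewrite !herm_E_skew mulrNN mulrN mulNr opprK.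
Qed.

Lemma Nq_eq0 phi : Nq phi = 0 -> phi = (0, 0).
Proof. by move/eqP; rewrite hermbar_eq0 => /eqP. Qed.

Lemma Xq0 i : Xq E (0, 0) i = 0.
Proof. exact: hermbar0r. Qed.

Lemma Yq0 i : Yq E (0, 0) i = 0.
Proof. exact: hermbar0r. Qed.

Lemma omegaq0 i j : omegaq E (0, 0) i j = 0.
Proof. by rewrite /omegaq hermbar0r raddf0. Qed.

Lemma hermbar_e0 phi : hermbar (e0 phi) (e0 phi) = hermbar phi phi.
Proof. by rewrite /hermbar addrC. Qed.

Lemma hermbar_scalebar_i phi :
  hermbar (scalebar 'i phi) (scalebar 'i phi) = hermbar phi phi.
Proof. by rewrite /hermbar !herm_i. Qed.

Section UnitVector.
Variable w : 'I_n -> C.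
Hypothesis w_real : forall i, (w i)^* = w i.
Hypothesis w_unit : vdot w w = 1.

Lemma herm_cliff x y : herm (cliff w *m x) (cliff w *m y) = herm x y.
Proof.
by rewrite herm_adj (adj_cliff w_real) mulNmx mulmxA
  cliff_sqr w_unit mul_scalar_mx scaleN1r opprK.
Qed.

Lemma hermbar_cliffbar phi :
  hermbar (cliffbar w phi) (cliffbar w phi) = hermbar phi phi.
Proof. by rewrite /hermbar /= hermNl hermNr opprK !herm_cliff. Qed.

Lemma herm_commutator_eigen A x y k k' :
  cliff w *m x = k *: x -> cliff w *m y = k' *: y ->
  herm ((A *m cliff w - cliff w *m A) *m x) y = (k + k'^*) * herm (A *m x) y.
Proof.
move=> Fx Fy; rewrite mulmxBl hermBl -!mulmxA Fx -scalemxAr hermZl.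
rewrite (herm_adj (cliff w)) (adj_cliff w_real) mulNmx Fy hermNr hermZr; ring.
Qed.

Section CliffPair.
Variable a : 'cV[C]_m.
Local Notation b := (- (cliff w *m a)).

Lemma Yq_cliff_pair i :
  Yq E (a, b) i = 2 * 'i * (herm (E i *m a) a - w i * herm (cliff w *m a) a).
Proof.
rewrite /Yq /hermbar /= !hermZl hermNl mulmxN hermNl hermNr opprK.
rewrite herm_adjr (adj_cliff w_real) mulNmx hermNl !mulmxA.
rewrite cliff_E_cliff w_unit scale1r mulmxBl -scalemxAl hermBl hermZl.
by ring.
Qed.

Lemma omegaq_cliff_pair i j :
  omegaq E (a, b) i j =
  'Im (2 * (w j * herm (E i *m a) a - w i * herm (E j *m a) a)).
Proof.
rewrite /omegaq /hermbar /= !mulmxN opprK hermNl hermNr.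
rewrite herm_adjr (adj_cliff w_real) mulNmx hermNl opprK.
have -> : E i *m (E j *m (cliff w *m a)) = E i *m E j *m cliff w *m a by rewrite !mulmxA.
rewrite (mulmxA (E i) (E j) a) (mulmxA (cliff w)) addrC -opprB -hermBl -mulmxBl.
rewrite cliff_commutator_EE mulmxBl -!scalemxAl hermBl !hermZl.
by congr ('Im _); ring.
Qed.

Lemma vdot_Yq_cliff_pair : vdot w (Yq E (a, b)) = 0.
Proof.
rewrite /vdot; under eq_bigr => i _ do rewrite Yq_cliff_pair mulrCA mulrBr mulrA.
rewrite -mulr_sumr sumrB -mulr_suml -herm_cliffl -/(vdot w w) w_unit mul1r.
by rewrite subrr mulr0.
Qed.

Lemma omegaq_cliff_pair_wedge i j : omegaq E (a, b) i j = wedge w (Yq E (a, b)) i j.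
Proof.
rewrite omegaq_cliff_pair /wedge !Yq_cliff_pair Im_conjN; first by ring.
by rewrite rmorphM rmorphB !rmorphM /= !w_real !herm_E_skew rmorph_nat; ring.
Qed.

End CliffPair.

Section Eigenpair.
Variables a b : 'cV[C]_m.
Hypothesis Fa : cliff w *m a = - 'i *: a.
Hypothesis Fb : cliff w *m b = 'i *: b.

Let eigen_sum_ba : 'i + (- 'i)^* = 2 * 'i :> C.
Proof. by rewrite rmorphN /= conjCi opprK; ring. Qed.

Let eigen_sum_ab : - 'i + 'i^* = - (2 * 'i) :> C.
Proof. by rewrite conjCi; ring. Qed.

Lemma herm_eigenpair : herm b a = 0.
Proof.
have := herm_commutator_eigen 1%:M Fb Fa.
rewrite !mul1mx mulmx1 subrr mul0mx herm0l eigen_sum_ba => /esym/eqP.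
by rewrite !mulf_eq0 pnatr_eq0 (negbTE (neq0Ci C)) /= => /eqP.
Qed.

Lemma vdot_Xq_eigenpair : vdot w (Xq E (a, b)) = 0.
Proof.
rewrite vdot_Xq /hermbar /= Fb Fa scaleNr opprK !hermZl -(conj_herm b a) herm_eigenpair.
by rewrite conjC0 mulr0 addr0.
Qed.

Lemma omegaq_eigenpair i j : omegaq E (a, b) i j = wedge (Xq E (a, b)) w i j.
Proof.
have hmu := herm_commutator_eigen (E i *m E j) Fb Fa.
have hnu := herm_commutator_eigen (E i *m E j) Fa Fb.
rewrite cliff_commutator_EE mulmxBl -!scalemxAl hermBl !hermZl in hmu.
rewrite cliff_commutator_EE mulmxBl -!scalemxAl hermBl !hermZl in hnu.
rewrite eigen_sum_ba -mulmxA in hmu; rewrite eigen_sum_ab -mulmxA in hnu.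
rewrite /omegaq /hermbar /= mulmxN opprK.
rewrite (Im_mulCi (r := w i * Xq E (a, b) j - w j * Xq E (a, b) i)).
- by rewrite /wedge; ring.
- by rewrite rmorphB !rmorphM /= !w_real !Xq_real.
apply: (@mulfI _ 2); first by rewrite pnatr_eq0.
transitivity (2 * 'i * herm (E i *m (E j *m b)) a
              - - (2 * 'i) * herm (E i *m (E j *m a)) b); first by ring.
rewrite -hmu -hnu !Xq_conj /= !(herm_adj (E _) a) !E_skew !mulNmx !hermNr.
by rewrite !conj_herm; ring.
Qed.

End Eigenpair.

Lemma Xq_saturated_identities phi : vdot w (Xq E phi) = Nq phi ->
  vdot w (Yq E phi) = 0 /\ forall i j, omegaq E phi i j = wedge w (Yq E phi) i j.
Proof.
move=> wX; have : cliffbar w (e0 phi) = phi.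
  by apply: cauchy_schwarz_eq; rewrite ?hermbar_cliffbar ?hermbar_e0 // -vdot_Xq.
case: phi {wX} => a b [_ <-].
by split; [exact: vdot_Yq_cliff_pair | exact: omegaq_cliff_pair_wedge].
Qed.

Lemma Yq_saturated_identities phi : vdot w (Yq E phi) = Nq phi ->
  vdot w (Xq E phi) = 0 /\ forall i j, omegaq E phi i j = wedge (Xq E phi) w i j.
Proof.
move=> wY; have : scalebar 'i (cliffbar w phi) = phi.
  by apply: cauchy_schwarz_eq; rewrite ?hermbar_scalebar_i ?hermbar_cliffbar // -vdot_Yq.
case: phi {wY} => a b /= [iFa iFb].
have Fa : cliff w *m a = - 'i *: a.
  by rewrite -{2}iFa scalerA mulNr -expr2 sqrCi opprK scale1r.
have Fb : cliff w *m b = 'i *: b.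
  by rewrite -{2}iFb !scalerN scalerA -expr2 sqrCi scaleN1r opprK.
by split; [exact: vdot_Xq_eigenpair | exact: omegaq_eigenpair].
Qed.

End UnitVector.
End Clifford.

Theorem mainTheorem8 (C : numClosedFieldType) (m n : nat)
    (E : 'I_n -> 'M[C]_m) (phi : Sbar C m) :
  clifford_frame E ->
  (Nq phi = vnorm (Xq E phi) \/ Nq phi = vnorm (Yq E phi)) ->
  [/\ (forall i j : 'I_n,
         Nq phi * omegaq E phi i j = wedge (Xq E phi) (Yq E phi) i j),
      vdot (Xq E phi) (Yq E phi) = 0
    & Nq phi ^+ 2 - vdot (Xq E phi) (Xq E phi) - vdot (Yq E phi) (Yq E phi)
        + 2^-1 * formnorm2 (omegaq E phi) = 0].
Proof.
case=> E_anticomm E_skew hnorm.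
have [N0|N_neq0] := eqVneq (Nq phi) 0.
  rewrite N0 (Nq_eq0 N0).
  by apply: frame_identities0 => [i|i|i j]; rewrite ?Xq0 ?Yq0 ?omegaq0.
case: hnorm => [NX|NY].
- have [u u_real [u_unit uX Xu]] :=
    unit_direction (Nq_real phi) (Xq_real E_skew phi) N_neq0 NX.
  have [uY omegaE] := Xq_saturated_identities E_anticomm E_skew u_real u_unit uX.
  exact: frame_identities_unit u_unit Xu uY omegaE.
- have [u u_real [u_unit uY Yu]] :=
    unit_direction (Nq_real phi) (Yq_real E_skew phi) N_neq0 NY.
  have [uX omegaE] := Yq_saturated_identities E_anticomm E_skew u_real u_unit uY.
  apply: frame_identities_swap
    (frame_identities_unit (w := wedge u (Xq E phi)) u_unit Yu uX (fun _ _ => erefl)) _.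
  by move=> i j; rewrite omegaE /wedge; ring.
Qed.
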